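(* Let $E,E':\mathcal P N\times Ł_n^S\to Ł_n$ be homogeneous $Ł_n$-valued effectivity functions. Then $E=E'$ if and only if $E^\sharp=E'^\sharp$, where $E^\sharp$ denotes the restriction of $E$ to $\mathcal P N\times Ł_1^S$.
   Context: For a positive integer $n$ let $Ł_n=\{0,\frac1n,\dots,1\}$ with $\neg x=1-x$, $x\oplus y=\min(x+y,1)$, $x\odot y=\max(x+y-1,0)$, applied pointwise to functions in $Ł_n^S$. $Ł_1^S=\{0,1\}^S\subseteq Ł_n^S$. $N$ is a finite set, $S$ a set. An $Ł_n$-valued effectivity function is any map $E:\mathcal P N\times Ł_n^S\to Ł_n$; it is homogeneous if $E(C,f\oplus f)=E(C,f)\oplus E(C,f)$ and $E(C,f\odot f)=E(C,f)\odot E(C,f)$ for all $C\subseteq N$, $f\in Ł_n^S$. *)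

From mathcomp Require Import all_boot.
Set Implicit Arguments. Unset Strict Implicit. Unset Printing Implicit Defensive.

(* The MV-chain Ł_n = {0, 1/n, ..., 1} is represented by numerators:
   k : 'I_n.+1 stands for k/n. *)
Definition Luk (n : nat) := 'I_n.+1.

Definition lneg (n : nat) (x : Luk n) : Luk n := inord (n - x).
Definition loplus (n : nat) (x y : Luk n) : Luk n := inord (minn (x + y) n).
(* x ⊙ y = max(x + y - 1, 0)  (truncated subtraction on numerators) *)
Definition lodot (n : nat) (x y : Luk n) : Luk n := inord ((x + y) - n).

Definition foplus (n : nat) (S : Type) (f g : S -> Luk n) : S -> Luk n :=
  fun s => loplus (f s) (g s).
Definition fodot (n : nat) (S : Type) (f g : S -> Luk n) : S -> Luk n :=
  fun s => lodot (f s) (g s).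

Definition eff_fun (n : nat) (N : finType) (S : Type) :=
  {set N} -> (S -> Luk n) -> Luk n.

Definition homogeneous (n : nat) (N : finType) (S : Type) (E : eff_fun n N S) :=
  forall (C : {set N}) (f : S -> Luk n),
    E C (foplus f f) = loplus (E C f) (E C f) /\
    E C (fodot f f) = lodot (E C f) (E C f).

(* embedding Ł_1 = {0,1} into Ł_n *)
Definition bool_to_Luk (n : nat) (b : bool) : Luk n := if b then ord_max else ord0.

Definition sharp (n : nat) (N : finType) (S : Type) (E : eff_fun n N S) :
  {set N} -> (S -> bool) -> Luk n :=
  fun C g => E C (fun s => bool_to_Luk n (g s)).

From mathcomp Require Import all_boot.
From mathcomp Require Import zify.
From Stdlib Require Import FunctionalExtensionality.

Set Implicit Arguments. Unset Strict Implicit.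

(* Doubling n times sends every nonzero value to 1, so
   on two-valued arguments E^♯ = E'^♯ forces E C f and E' C f to vanish
   together.  If a = E C f < b = E' C f, doubling (when 2b <= n) or squaring
   (when 2a >= n) doubles the gap b - a, which cannot go on forever; in the
   remaining case 2a < n < 2b squaring sends a to 0 but b to 2b - n > 0. *)

Lemma val_loplus n (x y : Luk n) : loplus x y = minn (x + y) n :> nat.
Proof. by rewrite /loplus inordK // ltnS geq_minr. Qed.

Lemma val_lodot n (x y : Luk n) : lodot x y = x + y - n :> nat.
Proof. by rewrite /lodot inordK // ltnS; have := ltn_ord x; have := ltn_ord y; lia. Qed.

Definition ldouble n (x : Luk n) : Luk n := loplus x x.

Lemma val_iter_ldouble n m (x : Luk n) : iter m (@ldouble n) x = minn (2 ^ m * x) n :> nat.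
Proof.
elim: m => [|m IHm] /=; first by rewrite mul1n; have := ltn_ord x; lia.
by rewrite val_loplus IHm expnS; lia.
Qed.

Lemma iter_ldouble_support n (x : Luk n) : iter n (@ldouble n) x = bool_to_Luk n (0 < x).
Proof.
apply: ord_inj; rewrite val_iter_ldouble /bool_to_Luk.
have n_le_exp : n <= 2 ^ n by apply/ltnW/ltn_expl.
case: posnP => [x0|x_gt0] /=; first by rewrite x0 muln0 min0n.
by apply/minn_idPr; rewrite (leq_trans n_le_exp) // leq_pmulr.
Qed.

Lemma homogeneous_iter_ldouble n (N : finType) S (E : eff_fun n N S) C f m :
  homogeneous E -> E C (fun s => iter m (@ldouble n) (f s)) = iter m (@ldouble n) (E C f).
Proof.
move=> homE; elim: m => [|m IHm] //=.
by have [-> _] := homE C (fun s => iter m (@ldouble n) (f s)); rewrite IHm.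
Qed.

Lemma sharp_eq_zero_iff n (N : finType) S (E E' : eff_fun n N S) C f :
  homogeneous E -> homogeneous E' -> sharp E = sharp E' ->
  (E C f == 0 :> nat) = (E' C f == 0 :> nat).
Proof.
move=> homE homE' sharpEE'.
have support_eq : bool_to_Luk n (0 < E C f) = bool_to_Luk n (0 < E' C f).
  have f_support : (fun s => iter n (@ldouble n) (f s)) = (fun s => bool_to_Luk n (0 < f s)).
    by apply: functional_extensionality => s; exact: iter_ldouble_support.
  rewrite -!iter_ldouble_support -!homogeneous_iter_ldouble // f_support.
  exact: (congr1 (fun F => F C (fun s => 0 < f s)) sharpEE').
move/(congr1 val): support_eq; rewrite /bool_to_Luk.
have := ltn_ord (E C f); have := ltn_ord (E' C f).
by case: posnP => ?; case: posnP => ? /=; lia.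
Qed.

Section SeparationByDoublingAndSquaring.

Variable n : nat.

Definition double_square_closed (R : Luk n -> Luk n -> Prop) :=
  forall x y, R x y -> R (loplus x x) (loplus y y) /\ R (lodot x x) (lodot y y).

Definition zero_compatible (R : Luk n -> Luk n -> Prop) :=
  forall x y, R x y -> (x == 0 :> nat) = (y == 0 :> nat).

Lemma double_square_closed_lt_False R m x y :
  double_square_closed R -> zero_compatible R ->
  R x y -> x < y -> n - (y - x) <= m -> False.
Proof.
move=> closedR zeroR; elim: m x y => [|m IHm] x y Rxy x_lt_y gap_bound.
  by have := ltn_ord y; move: (zeroR x y Rxy); do 2!case: eqP => //=; lia.
have [Rdouble Rsquare] := closedR x y Rxy.
have := ltn_ord y; case: (leqP (2 * y) n) => [y_small | y_big] y_le_n.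
  by apply: (IHm _ _ Rdouble); rewrite !val_loplus; lia.
case: (leqP n (2 * x)) => [x_big | x_small].
  by apply: (IHm _ _ Rsquare); rewrite !val_lodot; lia.
by move: (zeroR _ _ Rsquare); rewrite !val_lodot; do 2!case: eqP => //=; lia.
Qed.

Lemma double_square_closed_eq R x y :
  double_square_closed R -> zero_compatible R -> R x y -> x = y.
Proof.
move=> closedR zeroR Rxy; apply: ord_inj.
have closedRT : double_square_closed (fun x y => R y x).
  by move=> ? ? /closedR [].
have zeroRT : zero_compatible (fun x y => R y x) by move=> ? ? /zeroR ->.
case: (ltngtP x y) => // lt_xy; exfalso.
- exact: (double_square_closed_lt_False closedR zeroR Rxy lt_xy (leqnn _)).
- exact: (double_square_closed_lt_False closedRT zeroRT Rxy lt_xy (leqnn _)).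
Qed.

End SeparationByDoublingAndSquaring.

Theorem mainTheorem3 (n : nat) (hn : 0 < n) (N : finType) (S : Type)
    (E E' : eff_fun n N S) :
  homogeneous E -> homogeneous E' ->
  (E = E' <-> sharp E = sharp E').
Proof.
move=> homE homE'; split=> [-> // | sharpEE'].
pose R x y := exists C f, x = E C f /\ y = E' C f.
have closedR : double_square_closed R.
  move=> _ _ [C [f [-> ->]]].
  have [dE sE] := homE C f; have [dE' sE'] := homE' C f.
  by split; [exists C, (foplus f f) | exists C, (fodot f f)]; rewrite ?dE ?dE' ?sE ?sE'.
have zeroR : zero_compatible R.
  by move=> _ _ [C [f [-> ->]]]; exact: sharp_eq_zero_iff.
apply: functional_extensionality => C; apply: functional_extensionality => f.
by apply: (double_square_closed_eq closedR zeroR); exists C, f.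
Qed.
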